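(* Let $n\ge1$ and $z\in\{1,\dots,n+1\}$. Let $v_{n,z}=(a_1,\dots,a_n)$ with $a_i=z+1-i$ for $i<z$ and $a_i=1$ for $i\ge z$, and $v^{n,z}=(b_1,\dots,b_n)$ with $b_i=1$ for $i<z$ and $b_i=i+2-z$ for $i\ge z$. Then $v_{n,z}$ and $v^{n,z}$ realize the same triangulation except for one anti-clockwise rotation: the triangulation $F(v^{n,z})$ is obtained from $F(v_{n,z})$ by replacing every vertex label $l$ by $l-1$ (and the label $0$ by $n+2$).
   Context: A Dyck path of length $2N$ is a word in $U,D$ with $N$ of each letter such that every prefix has at least as many $U$'s as $D$'s; $\mathfrak{D}_{2N}$ is their set. For $G\in\mathfrak{D}_{2(n+1)}$ let $m_i$ be the number of $U$'s before the $i$-th $D$; $G$ is encoded by $v_G=(m_1-0,m_2-1,\dots,m_n-(n-1))$. For $u=(u_1,\dots,u_m)\in\mathbb{N}^m$ and $1\le i\le m$, $T_i(u)$ is defined by: $r_0=u_i$; while some $l\in\{1,\dots,i\}$ has $r_k-u_l>0$, let $l_k$ be the largest such $l$ and $r_{k+1}=r_k-u_{l_k}$; if this stops at $r_t$ after $t\ge0$ steps, $T_i(u)=r_t+t$. For $u\in\mathbb{N}^n$, $f(u)$ is the Dyck path $G\in\mathfrak{D}_{2(n+1)}$ with $v_G=(T_1(u),\dots,T_n(u))$. For $G\in\mathfrak{D}_{2(n+1)}$ let $\lambda_G=(\lambda_1,\dots,\lambda_n)$, where $\lambda_i$ is the number of $D$'s before the $(n+2-i)$-th $U$ in $G$. The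 triangulation $g(G)$ of the polygon with vertices labelled $0,1,\dots,n+2$ is built as follows: for $i=1,\dots,n$, in the current polygon (with $n+4-i$ vertices labelled consecutively $0,1,\dots,n+3-i$) draw the diagonal between the vertices labelled $\lambda_i$ and $\lambda_i+2$, delete the vertex labelled $\lambda_i+1$ (cutting off a triangle), and relabel the remaining polygon consecutively: vertices with label $\le\lambda_i$ keep their labels, and each vertex with label $j+1>\lambda_i+1$ receives label $j$. The drawn diagonals, expressed in the original labels $0,\dots,n+2$, form $g(G)$. Finally $F=g\circ f$. Example: $G=UDUDUUDD$ ($n=3$) has $\lambda_G=(2,2,1)$ and $g(G)=\{\{2,4\},\{2,5\},\{1,5\}\}$. *)

From mathcomp Require Import all_boot.
Set Implicit Arguments. Unset Strict Implicit. Unset Printing Implicit Defensive.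

(* Dyck paths are words over bool: true = U, false = D. *)

(* The map T_i.  [pre] = (u_1,...,u_i), r = current value r_k, t = step count k.
   A step picks the largest l <= i with r - u_l > 0, i.e. u_l < r. *)
Fixpoint Tloop (fuel : nat) (pre : seq nat) (r t : nat) : nat :=
  match fuel with
  | 0 => r + t
  | f.+1 =>
      if has (fun x => x < r) pre
      then Tloop f pre (r - last 0 [seq x <- pre | x < r]) t.+1
      else r + t
  end.

(* T_i(u), for 1 <= i <= size u.  Fuel u_i + 1 suffices whenever the
   iteration terminates, in particular when all entries of u are >= 1. *)
Definition Tmap (i : nat) (u : seq nat) : nat :=
  let ui := nth 0 u i.-1 in Tloop ui.+1 (take i u) ui 0.

Fixpoint path_of_m (prev : nat) (m : seq nat) : seq bool :=
  match m with
  | [::] => [::]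
  | mi :: ms => nseq (mi - prev) true ++ false :: path_of_m mi ms
  end.

(* The Dyck path G in D_{2(n+1)} with v_G = v  (n = size v):
   m_i = v_i + (i-1) for i <= n, and m_{n+1} = n+1. *)
Definition path_of_v (v : seq nat) : seq bool :=
  let n := size v in
  path_of_m 0 (rcons [seq nth 0 v i + i | i <- iota 0 n] n.+1).

Definition fmap (u : seq nat) : seq bool :=
  path_of_v [seq Tmap i u | i <- iota 1 (size u)].

Definition D_before_kth_U (w : seq bool) (k : nat) : nat :=
  let pos := nth 0 [seq j <- iota 0 (size w) | nth false w j] k.-1 in
  count negb (take pos w).

Definition lambda_of (n : nat) (G : seq bool) : seq nat :=
  [seq D_before_kth_U G (n + 2 - i) | i <- iota 1 n].

(* Cutting-ear process: [poly] lists the original labels of the current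
   polygon's vertices in the order of their current labels 0,1,2,... *)
Fixpoint gsteps (lams : seq nat) (poly : seq nat) : seq (nat * nat) :=
  match lams with
  | [::] => [::]
  | l :: ls => (nth 0 poly l, nth 0 poly l.+2)
                 :: gsteps ls (take l.+1 poly ++ drop l.+2 poly)
  end.

(* g(G) for G in D_{2(n+1)}: list of diagonals (in original labels 0..n+2) *)
Definition gmap (n : nat) (G : seq bool) : seq (nat * nat) :=
  gsteps (lambda_of n G) (iota 0 (n + 3)).

Definition Fmap (u : seq nat) : seq (nat * nat) := gmap (size u) (fmap u).

Definition mem_diag (T : seq (nat * nat)) (x y : nat) : bool :=
  ((x, y) \in T) || ((y, x) \in T).

Definition v_low (n z : nat) : seq nat :=
  [seq (if i < z then z + 1 - i else 1) | i <- iota 1 n].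
Definition v_up (n z : nat) : seq nat :=
  [seq (if i < z then 1 else i + 2 - z) | i <- iota 1 n].

Definition relabel (n l : nat) : nat := if l == 0 then n + 2 else l.-1.

Definition relabel_tri (n : nat) (T : seq (nat * nat)) : seq (nat * nat) :=
  [seq (relabel n d.1, relabel n d.2) | d <- T].

(* T fixes v_{n,z}, whose entries never exceed the earlier ones, while on
   v^{n,z} it gives 1 before position z and 2 from there on (at most one
   subtraction step, by the preceding entry).  So the two Dyck paths have heights
   m_j = max(z, j) and m_j = j + [z <= j <= n], and counting the D's before each
   U gives lambda = (n, ..., z, 0, ..., 0) and (n-1, ..., z-1, z-1, ..., 1).
   Cutting ears along a decreasing run of lambda draws a fan to the vertex just
   after the run, and a run of zeros draws a fan from vertex 0.  Hence
   F(v_{n,z}) = {j, n+2} (z <= j <= n) + {0, i} (2 <= i <= z) and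
   F(v^{n,z}) = {j, n+1} (z-1 <= j <= n-1) + {j, n+2} (1 <= j <= z-1),
   and l |-> l-1 maps the first onto the second. *)

From mathcomp Require Import all_boot zify.

Set Implicit Arguments.
Unset Strict Implicit.
Unset Printing Implicit Defensive.

Lemma iotaSr m n : iota m n.+1 = rcons (iota m n) (m + n).
Proof. by rewrite -addn1 iotaD cats1. Qed.

Lemma map_subn_iota m d c : [seq k - d | k <- iota (m + d) c] = iota m c.
Proof. by rewrite addnC iotaDl -map_comp (eq_map (addKn d)) map_id. Qed.

Lemma rev_iota m n : rev (iota m n) = [seq m + n - i | i <- iota 1 n].
Proof.
elim: n => [|n IH] //; rewrite iotaSr rev_rcons IH /= (iotaDl 1 1) -map_comp.
by congr cons; [lia | apply: eq_map => i /=; lia].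
Qed.

Lemma count_ltn_iota m n j : j <= n -> count (fun i => i < m + j) (iota m n) = j.
Proof. by move=> le_jn; rewrite -size_filter filter_iota_ltn ?size_iota. Qed.

Lemma count_ltn_map_iota1 (h : nat -> nat) N k K : K <= N ->
  {in iota 1 N, forall j, (h j < k) = (j < K.+1)} ->
  count (fun x => x < k) (map h (iota 1 N)) = K.
Proof.
by move=> le_KN hK; rewrite count_map (eq_in_count hK) -add1n count_ltn_iota.
Qed.

Lemma nth_map_iota1 (f : nat -> nat) n i : 1 <= i <= n ->
  nth 0 [seq f j | j <- iota 1 n] i.-1 = f i.
Proof.
move=> lt_in; rewrite (nth_map 0) ?size_iota ?nth_iota; [congr f|..]; lia.
Qed.

Lemma take_map_iota (f : nat -> nat) m n i : i <= n ->
  take i [seq f j | j <- iota m n] = [seq f j | j <- iota m i].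
Proof. by move=> le_in; rewrite -map_take take_iota (minn_idPl le_in). Qed.

Lemma TloopS f pre r t : Tloop f.+1 pre r t =
  if has (fun x => x < r) pre
  then Tloop f pre (r - last 0 [seq x <- pre | x < r]) t.+1 else r + t.
Proof. by []. Qed.

Lemma Tloop_stop f pre r t :
  all (fun x => r <= x) pre -> Tloop f.+1 pre r t = r + t.
Proof.
move=> /allP ge_r; rewrite TloopS; case: hasP => // -[x /ge_r].
by rewrite leqNgt => /negPf->.
Qed.

Lemma Tloop_last_step f s x s' r t : x < r -> all (fun y => r <= y) s' ->
  all (fun y => r - x <= y) (s ++ x :: s') ->
  Tloop f.+2 (s ++ x :: s') r t = r - x + t.+1.
Proof.
move=> lt_xr /allP ge_r ge_rx; rewrite TloopS has_cat /= lt_xr orbT.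
rewrite filter_cat /= lt_xr (eq_in_filter (s := s') (a2 := pred0)).
  by rewrite filter_pred0 last_cat; apply: Tloop_stop.
by move=> y /ge_r; rewrite leqNgt => /negPf.
Qed.

Lemma Tmap_stop i u :
  all (fun x => nth 0 u i.-1 <= x) (take i u) -> Tmap i u = nth 0 u i.-1.
Proof. by move=> ge_ui; rewrite /Tmap Tloop_stop ?addn0. Qed.

Lemma Tmap_last_step i u s x : take i u = s ++ [:: x; nth 0 u i.-1] ->
  x < nth 0 u i.-1 -> all (fun y => nth 0 u i.-1 - x <= y) (take i u) ->
  Tmap i u = (nth 0 u i.-1 - x).+1.
Proof.
rewrite /Tmap; case: (nth 0 u i.-1) => [|r] // -> lt_xr ge_rx.
by rewrite Tloop_last_step ?addn1 //= leqnn.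
Qed.

Lemma Tmap1 u : Tmap 1 u = nth 0 u 0.
Proof. by rewrite Tmap_stop //; case: u => [|a u] /=; rewrite ?leqnn ?take0. Qed.

Lemma fmapE u : fmap u = path_of_m 0
  [seq (if j <= size u then Tmap j u + j.-1 else j) | j <- iota 1 (size u).+1].
Proof.
rewrite /fmap /path_of_v size_map size_iota iotaSr map_rcons add1n ltnn.
congr (path_of_m 0 (rcons _ _)); rewrite [in RHS](iotaDl 1 0) -[in RHS]map_comp.
apply/eq_in_map => i; rewrite mem_iota => /= lt_in.
by rewrite (nth_map 0) ?size_iota // nth_iota // lt_in.
Qed.

Definition U_positions (w : seq bool) : seq nat :=
  [seq j <- iota 0 (size w) | nth false w j].

Lemma U_positions_cons b w :
  U_positions (b :: w) = (if b then [:: 0] else [::]) ++ map S (U_positions w).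
Proof.
rewrite /U_positions /= -(addn0 1) iotaDl filter_map.
by case: b.
Qed.

Lemma size_U_positions w : size (U_positions w) = count id w.
Proof.
by elim: w => // b w IH; rewrite U_positions_cons size_cat size_map IH; case: b.
Qed.

Lemma D_before_kth_UE w k :
  D_before_kth_U w k = count negb (take (nth 0 (U_positions w) k.-1) w).
Proof. by []. Qed.

Lemma D_before_kth_U_true w k :
  D_before_kth_U (true :: w) k.+2 = D_before_kth_U w k.+1.
Proof.
rewrite !D_before_kth_UE U_positions_cons /=.
have [lt_k | le_k] := ltnP k (size (U_positions w)).
  by rewrite (nth_map 0) //=.
by rewrite !nth_default ?size_map // !take0.
Qed.

(* The bound matters: past the last U, [nth] returns the junk position 0. *)
Lemma D_before_kth_U_false w k : 1 <= k <= count id w ->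
  D_before_kth_U (false :: w) k = (D_before_kth_U w k).+1.
Proof.
move=> lt_kw; rewrite !D_before_kth_UE U_positions_cons /= (nth_map 0) //.
by rewrite size_U_positions; lia.
Qed.

Lemma D_before_kth_U_nseq j w k : 1 <= k ->
  D_before_kth_U (nseq j true ++ w) k = if k <= j then 0 else D_before_kth_U w (k - j).
Proof.
elim: j k => [|j IH] [|[|k]] // _.
by rewrite /= D_before_kth_U_true IH.
Qed.

Lemma path_leq_last p m : path leq p m -> p <= last p m.
Proof.
elim: m p => //= x m IH p /andP[le_px /IH le_x_last]; exact: leq_trans le_x_last.
Qed.

Lemma count_path_of_m p m : path leq p m -> count id (path_of_m p m) = last p m - p.
Proof.
elim: m p => [|x m IH] p /=; first by rewrite subnn.
move=> /andP[le_px path_m]; rewrite count_cat count_nseq /= IH //.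
by have := path_leq_last path_m; lia.
Qed.

Lemma D_before_kth_U_path_of_m p m k : path leq p m -> 1 <= k <= last p m - p ->
  D_before_kth_U (path_of_m p m) k = count (fun x => x < p + k) m.
Proof.
elim: m p k => [|x m IH] p k /=; first lia.
move=> /andP[le_px path_m] lt_k; rewrite D_before_kth_U_nseq; last lia.
case: (leqP k (x - p)) => [le_k | lt_xk].
  have /allP ge_x := order_path_min leq_trans path_m.
  rewrite (_ : x < p + k = false) 1?(eq_in_count (a2 := pred0)) ?count_pred0 //; try lia.
  by move=> y /ge_x /=; lia.
rewrite D_before_kth_U_false ?IH ?count_path_of_m //; try lia.
have -> : x + (k - (x - p)) = p + k by lia.
have -> : x < p + k by lia.
by rewrite add1n.
Qed.

Lemma lambda_of_path_of_m n m : sorted leq m -> last 0 m = n.+1 ->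
  lambda_of n (path_of_m 0 m) = rev [seq count (fun x => x < k) m | k <- iota 2 n].
Proof.
move=> sorted_m last_m; have path_m : path leq 0 m by case: m sorted_m {last_m}.
rewrite /lambda_of -map_rev rev_iota -map_comp.
apply/eq_in_map => i; rewrite mem_iota => lt_in /=.
by rewrite D_before_kth_U_path_of_m ?last_m ?add0n ?(addnC 2 n) //; lia.
Qed.

Lemma gsteps_cons l ls poly : gsteps (l :: ls) poly =
  (nth 0 poly l, nth 0 poly l.+2) :: gsteps ls (take l.+1 poly ++ drop l.+2 poly).
Proof. by []. Qed.

Lemma gsteps_fan_right k c p a s l : size p = k + c + 1 ->
  gsteps (rev (iota k c) ++ l) (p ++ a :: s) =
  [seq (nth 0 p j, a) | j <- rev (iota k c)] ++ gsteps l (take k.+1 p ++ a :: s).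
Proof.
elim: c p => [|c IH] p size_p; first by rewrite take_oversize // size_p addn0 addn1.
have {}size_p : size p = (k + c).+2 by lia.
have nth_tip : nth 0 (p ++ a :: s) (k + c) = nth 0 p (k + c).
  by rewrite nth_cat size_p ltnW.
have nth_apex : nth 0 (p ++ a :: s) (k + c).+2 = a.
  by rewrite nth_cat size_p ltnn subnn.
have cut_ear : take (k + c).+1 (p ++ a :: s) ++ drop (k + c).+2 (p ++ a :: s) =
    take (k + c).+1 p ++ a :: s.
  by rewrite take_cat drop_cat size_p ltnSn ltnn subnn drop0.
rewrite iotaSr rev_rcons cat_cons gsteps_cons nth_tip nth_apex cut_ear.
rewrite IH ?size_take ?size_p ?ltnSn ?addn1 // take_takel; last lia.
congr (_ :: _ ++ _); apply/eq_in_map => j; rewrite mem_rev mem_iota => lt_j.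
by rewrite nth_take //; lia.
Qed.

Lemma gsteps_fan_left c x j s :
  gsteps (nseq c 0) (x :: iota j c.+1 ++ s) = [seq (x, i) | i <- iota j.+1 c].
Proof. by elim: c j => [|c IH] j //=; rewrite -IH. Qed.

Lemma relabel_gt0 n l : 0 < l -> relabel n l = l.-1.
Proof. by rewrite /relabel; case: l. Qed.

Lemma mem_diag_cat T1 T2 x y :
  mem_diag (T1 ++ T2) x y = mem_diag T1 x y || mem_diag T2 x y.
Proof. by rewrite /mem_diag !mem_cat orbACA. Qed.

Lemma mem_diag_rev T x y : mem_diag (rev T) x y = mem_diag T x y.
Proof. by rewrite /mem_diag !mem_rev. Qed.

Lemma mem_diag_swap T x y : mem_diag [seq (d.2, d.1) | d <- T] x y = mem_diag T x y.
Proof.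
have swap_inj : injective (fun d : nat * nat => (d.2, d.1)) by move=> [a b] [c d] [-> ->].
by rewrite /mem_diag (mem_map swap_inj _ (y, x)) (mem_map swap_inj _ (x, y)) orbC.
Qed.

Section ExtremalVectors.

Variables n z : nat.
Hypothesis z_range : 1 <= z <= n + 1.

Lemma size_v_low : size (v_low n z) = n.
Proof. by rewrite size_map size_iota. Qed.

Lemma size_v_up : size (v_up n z) = n.
Proof. by rewrite size_map size_iota. Qed.

Lemma Tmap_v_low i : 1 <= i <= n ->
  Tmap i (v_low n z) = if i < z then z + 1 - i else 1.
Proof.
move=> lt_in; rewrite Tmap_stop /v_low nth_map_iota1 // take_map_iota; try lia.
by rewrite all_map; apply/allP => j; rewrite mem_iota /=; case: ifP; case: ifP; lia.
Qed.

Lemma Tmap_v_up i : 1 <= i <= n -> Tmap i (v_up n z) = if i < z then 1 else 2.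
Proof.
move=> lt_in; rewrite /v_up.
set g := fun j => if j < z then 1 else j + 2 - z.
have g_ge1 j : 1 <= g j by rewrite /g; case: ifP; lia.
have take_ge1 : all (leq 1) (take i (map g (iota 1 n))).
  by apply/allP => _ /mem_take /mapP[j _ ->].
have [lt_iz | le_zi] := ltnP i z.
  by rewrite Tmap_stop nth_map_iota1 // /g lt_iz.
case: i lt_in le_zi take_ge1 => [|[|k]] lt_kn le_zk take_ge1 //.
  by rewrite Tmap1 (@nth_map_iota1 _ _ 1) // /g; case: ifP; lia.
have g_step : g k.+2 - g k.+1 = 1 by rewrite /g; case: ifP; case: ifP; lia.
have nth_g : nth 0 (map g (iota 1 n)) k.+1 = g k.+2 by rewrite (@nth_map_iota1 _ _ k.+2).
have take_g : take k.+2 (map g (iota 1 n)) = map g (iota 1 k) ++ [:: g k.+1; g k.+2].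
  by rewrite take_map_iota // -[k.+2]addn2 iotaD map_cat add1n addn2.
rewrite (@Tmap_last_step _ _ (map g (iota 1 k)) (g k.+1));
  rewrite ?nth_g ?g_step ?take_g //.
- by rewrite -subn_gt0 g_step.
- by rewrite -take_g.
Qed.

Lemma lambda_v_low :
  lambda_of n (fmap (v_low n z)) = rev (iota z (n + 1 - z)) ++ nseq (z - 1) 0.
Proof.
have heights : [seq (if j <= n then Tmap j (v_low n z) + j.-1 else j)
    | j <- iota 1 n.+1] = [seq maxn z j | j <- iota 1 n.+1].
  apply/eq_in_map => j; rewrite mem_iota => lt_jn.
  by case: ifP => le_jn; rewrite ?Tmap_v_low; try case: ifP; lia.
rewrite fmapE size_v_low heights lambda_of_path_of_m; first last.
- by rewrite iotaSr map_rcons last_rcons; lia.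
- by rewrite sorted_map; apply: sub_sorted (iota_ltn_sorted 1 n.+1) => a b /=; lia.
have -> : iota 2 n = iota 2 (z - 1) ++ iota (z + 1) (n + 1 - z).
  by rewrite (_ : z + 1 = 2 + (z - 1)) -?iotaD; [congr iota | ]; lia.
rewrite map_cat rev_cat; congr (rev _ ++ _).
  rewrite -[RHS](map_subn_iota z 1); apply/eq_in_map => k; rewrite mem_iota => lt_k.
  by apply: count_ltn_map_iota1 => [|j]; [|rewrite mem_iota => lt_j]; lia.
have /all_pred1P -> : all (pred1 0)
    [seq count (fun x => x < k) [seq maxn z j | j <- iota 1 n.+1] | k <- iota 2 (z - 1)].
  rewrite all_map; apply/allP => k; rewrite mem_iota => lt_k; apply/eqP.
  by apply: count_ltn_map_iota1 => [|j]; [|rewrite mem_iota => lt_j]; lia.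
by rewrite size_map size_iota rev_nseq.
Qed.

Lemma lambda_v_up :
  lambda_of n (fmap (v_up n z)) = rev (iota (z - 1) (n + 1 - z)) ++ rev (iota 1 (z - 1)).
Proof.
have heights : [seq (if j <= n then Tmap j (v_up n z) + j.-1 else j)
    | j <- iota 1 n.+1] = [seq (if z <= j <= n then j.+1 else j) | j <- iota 1 n.+1].
  apply/eq_in_map => j; rewrite mem_iota => lt_jn.
  by case: ifP => le_jn; rewrite ?Tmap_v_up; try case: ifP; try case: ifP; lia.
rewrite fmapE size_v_up heights lambda_of_path_of_m; first last.
- by rewrite iotaSr map_rcons last_rcons; case: ifP; lia.
- by rewrite sorted_map; apply: sub_sorted (iota_ltn_sorted 1 n.+1) => a b /=;
    case: ifP; case: ifP; lia.
have -> : iota 2 n = iota 2 (z - 1) ++ iota (z - 1 + 2) (n + 1 - z).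
  by rewrite (_ : z - 1 + 2 = 2 + (z - 1)) -?iotaD; [congr iota | ]; lia.
rewrite map_cat rev_cat; congr (rev _ ++ rev _).
  rewrite -[RHS](map_subn_iota (z - 1) 2); apply/eq_in_map => k; rewrite mem_iota => lt_k.
  by apply: count_ltn_map_iota1 => [|j]; [|rewrite mem_iota => lt_j; case: ifP]; lia.
rewrite -[RHS](map_subn_iota 1 1); apply/eq_in_map => k; rewrite mem_iota => lt_k.
by apply: count_ltn_map_iota1 => [|j]; [|rewrite mem_iota => lt_j; case: ifP]; lia.
Qed.

Lemma Fmap_v_low :
  Fmap (v_low n z) = [seq (j, n + 2) | j <- rev (iota z (n + 1 - z))] ++
                     [seq (0, i) | i <- iota 2 (z - 1)].
Proof.
rewrite /Fmap /gmap size_v_low lambda_v_low //.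
have -> : iota 0 (n + 3) = iota 0 (n + 2) ++ [:: n + 2] by rewrite cats1 addnS iotaSr.
rewrite gsteps_fan_right ?size_iota; last lia.
have -> : take z.+1 (iota 0 (n + 2)) = 0 :: iota 1 (z - 1).+1.
  by rewrite take_iota (minn_idPl _) ?subn1 ?prednK //; lia.
rewrite cat_cons gsteps_fan_left; congr (_ ++ _).
apply/eq_in_map => j; rewrite mem_rev mem_iota => lt_j.
by rewrite nth_iota //; lia.
Qed.

Lemma Fmap_v_up :
  Fmap (v_up n z) = [seq (j, n + 1) | j <- rev (iota (z - 1) (n + 1 - z))] ++
                    [seq (j, n + 2) | j <- rev (iota 1 (z - 1))].
Proof.
rewrite /Fmap /gmap size_v_up lambda_v_up //.
have -> : iota 0 (n + 3) = iota 0 (n + 1) ++ [:: n + 1; n + 2].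
  by rewrite (_ : n + 3 = n + 1 + 2) ?iotaD ?addn1 ?addn2; [|lia].
rewrite gsteps_fan_right ?size_iota; last lia.
have -> : take (z - 1).+1 (iota 0 (n + 1)) ++ [:: n + 1; n + 2] =
    (iota 0 z ++ [:: n + 1]) ++ n + 2 :: [::].
  by rewrite -catA take_iota (minn_idPl _) ?subn1 ?prednK //; lia.
rewrite -{1}(cats0 (rev (iota 1 (z - 1)))) gsteps_fan_right ?size_cat ?size_iota;
  last by rewrite /=; lia.
rewrite [gsteps [::] _]/= cats0.
congr (_ ++ _); apply/eq_in_map => j; rewrite mem_rev mem_iota => lt_j.
  by rewrite nth_iota //; lia.
by rewrite nth_cat size_iota ifT ?nth_iota //; lia.
Qed.

Lemma relabel_tri_Fmap_v_low :
  relabel_tri n (Fmap (v_low n z)) =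
  [seq (j, n + 1) | j <- rev (iota (z - 1) (n + 1 - z))] ++
  [seq (n + 2, j) | j <- iota 1 (z - 1)].
Proof.
have z_gt0 : 0 < z by lia.
rewrite Fmap_v_low // /relabel_tri map_cat -!map_comp; congr (_ ++ _).
  rewrite -[in RHS](map_subn_iota (z - 1) 1) subnK // -map_rev -map_comp.
  apply/eq_in_map => j; rewrite mem_rev mem_iota => lt_j /=.
  by rewrite !relabel_gt0 ?subn1 ?addn1 ?addn2 //; lia.
rewrite -[in RHS](map_subn_iota 1 1) -map_comp; apply/eq_in_map => i.
rewrite mem_iota => lt_i /=; rewrite [relabel n i]relabel_gt0 ?subn1 //; lia.
Qed.

End ExtremalVectors.

Theorem lemma18 (n z : nat) :
  1 <= n -> 1 <= z <= n + 1 ->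
  forall x y : nat,
    mem_diag (Fmap (v_up n z)) x y = mem_diag (relabel_tri n (Fmap (v_low n z))) x y.
Proof.
move=> _ z_range x y.
rewrite Fmap_v_up // relabel_tri_Fmap_v_low // !mem_diag_cat; congr (_ || _).
by rewrite -mem_diag_rev map_rev revK -mem_diag_swap -map_comp.
Qed.
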